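(* Let $k\ge 2$. Let $\theta$ be an antimorphic involution on $\Sigma^*$ and $\theta'$ an antimorphic involution on $\Sigma'^*$, for finite alphabets $\Sigma,\Sigma'$, such that $|\operatorname{Trn}(\theta')|\ge|\operatorname{Trn}(\theta)|$ and $|\operatorname{Idt}(\theta')|+|\operatorname{Trn}(\theta')|\ge|\operatorname{Idt}(\theta)|+|\operatorname{Trn}(\theta)|$. If there is an infinite word over $\Sigma$ that is pseudo-$k$th-power-free with respect to $\theta$, then there is an infinite word over $\Sigma'$ that is pseudo-$k$th-power-free with respect to $\theta'$.
   Context: Alphabets are totally ordered (letters $0,1,2,\dots$). A function $\theta:\Sigma^*\to\Sigma^*$ is an antimorphic involution if $\theta(uv)=\theta(v)\theta(u)$ and $\theta(\theta(w))=w$. $\operatorname{Idt}(\theta)=\{a\in\Sigma:\theta(a)=a\}$ and $\operatorname{Trn}(\theta)=\{a\in\Sigma:\theta(a)>a\}$. A nonempty word $w$ is a pseudo $k$th power with respect to $\theta$ if $w=u_1\cdots u_k$ where for all $1\le i,j\le k$, $u_i=u_j$ or $u_i=\theta(u_j)$; a word is pseudo-$k$th-power-free if no factor (contiguous subword) of it is a pseudo $k$th power. *)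

(* Alphabets are 'I_n = {0,...,n-1} with their natural total order. *)
From mathcomp Require Import all_boot.
Set Implicit Arguments. Unset Strict Implicit. Unset Printing Implicit Defensive.

Section Pseudo.
Variable T : eqType.

Definition antimorphic_involution (th : seq T -> seq T) : Prop :=
  (forall u v, th (u ++ v) = th v ++ th u) /\ (forall w, th (th w) = w).

Definition pseudo_power (th : seq T -> seq T) (k : nat) (w : seq T) : Prop :=
  w <> [::] /\
  exists us : seq (seq T),
    [/\ size us = k, flatten us = w &
        forall i j, i < k -> j < k ->
          nth [::] us i = nth [::] us j \/ nth [::] us i = th (nth [::] us j)].

Definition factor (x : nat -> T) (i len : nat) : seq T := mkseq (fun t => x (i + t)) len.

Definition inf_pseudo_power_free (th : seq T -> seq T) (k : nat) (x : nat -> T) : Prop :=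
  forall i len, ~ pseudo_power th k (factor x i len).
End Pseudo.

Definition Idt n (th : seq 'I_n -> seq 'I_n) : {set 'I_n} :=
  [set a | th [:: a] == [:: a]].
Definition Trn n (th : seq 'I_n -> seq 'I_n) : {set 'I_n} :=
  [set a | [exists b : 'I_n, (th [:: a] == [:: b]) && (a < b)]].

From mathcomp Require Import all_boot zify.
Set Implicit Arguments. Unset Strict Implicit. Unset Printing Implicit Defensive.

(* An antimorphic involution is [w |-> rev (map f w)] for an involution [f]
   of the alphabet; Idt is the set of its fixed letters and Trn contains the
   smaller letter of each 2-cycle.  The two cardinality hypotheses yield an
   injective letter map [g] sending each 2-cycle of [f] onto a 2-cycle of [f']
   and each fixed letter either to a fixed letter of [f'] or to the smaller
   letter of a 2-cycle of [f'] that is not otherwise hit.  Then [f' (g a)] is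
   either [g (f a)] or outside the image of [g], so whenever [u' = th' v'] with
   [u'], [v'] images of words [u], [v], already [u = th v]: a pseudo power in
   the image of [g] is the image of a pseudo power, and [g \o x] is
   pseudo-power-free whenever [x] is. *)

Section AntimorphicInvolution.
Variables (A : eqType) (th : seq A -> seq A).
Hypothesis thA : antimorphic_involution th.

Lemma antimorphic_involution_nil : th [::] = [::].
Proof.
case: thA => thM _; have /(congr1 size) := thM [::] [::].
by rewrite cat0s size_cat => /eqP; rewrite -{1}[size _]addn0 eqn_add2l eq_sym size_eq0 => /eqP.
Qed.

Lemma size_antimorphic_involution w : size (th w) = size w.
Proof.
case: thA => thM thK.
have size_letter a : 0 < size (th [:: a]).
  rewrite lt0n size_eq0; apply/eqP => th_a.
  by have := thK [:: a]; rewrite th_a antimorphic_involution_nil.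
have size_ge v : size v <= size (th v).
  by elim: v => [|a v IHv] //=; rewrite -cat1s thM size_cat -addn1 leq_add.
by apply/eqP; rewrite eqn_leq size_ge andbT -{2}(thK w) size_ge.
Qed.

Lemma antimorphic_involution_letter :
  exists f : A -> A, involutive f /\ forall w, th w = rev (map f w).
Proof.
case: thA => thM thK.
pose f a := head a (th [:: a]).
have th_letter a : th [:: a] = [:: f a].
  by rewrite /f; have := size_antimorphic_involution [:: a]; case: (th [:: a]) => [|b []].
have th_rev_map w : th w = rev (map f w).
  elim: w => [|a w IHw] /=; first exact: antimorphic_involution_nil.
  by rewrite -cat1s thM IHw th_letter rev_cons cats1.
by exists f; split=> // a; have := thK [:: a]; rewrite !th_letter => -[].
Qed.

End AntimorphicInvolution.

Lemma map_reshape (A B : Type) (g : A -> B) sh s :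
  map (map g) (reshape sh s) = reshape sh (map g s).
Proof. by elim: sh s => //= l sh IHsh s; rewrite map_take IHsh map_drop. Qed.

Section PullBack.
Variables (A B : eqType) (f : A -> A) (f' : B -> B) (g : A -> B).
Hypothesis g_inj : injective g.

Definition compatible := forall a, f' (g a) = g (f a) \/ forall b, g b <> f' (g a).

Hypothesis g_compat : compatible.
Variables (th : seq A -> seq A) (th' : seq B -> seq B).
Hypotheses (th_f : forall w, th w = rev (map f w)) (th'_f' : forall w, th' w = rev (map f' w)).

Lemma map_rev_compatible u v :
  map g u = rev (map f' (map g v)) -> u = rev (map f v).
Proof.
move=> Euv; apply: (inj_map g_inj); rewrite Euv map_rev -!map_comp; congr rev.
apply/eq_in_map => c cv /=; have [//|out_of_image] := g_compat c.
have : f' (g c) \in map g u by rewrite Euv mem_rev -map_comp; apply: map_f.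
by case/mapP => b _ /esym /out_of_image.
Qed.

Lemma pseudo_power_map k w : pseudo_power th' k (map g w) -> pseudo_power th k w.
Proof.
move=> [w_nil [us [size_us flat_us us_pseudo]]]; split.
  by move=> w0; apply: w_nil; rewrite w0.
pose vs := reshape (shape us) w.
have map_vs : map (map g) vs = us.
  by rewrite /vs map_reshape -flat_us flattenK.
have nth_vs i : i < k -> map g (nth [::] vs i) = nth [::] us i.
  by move=> ik; rewrite -map_vs (nth_map [::]) // -(size_map (map g)) map_vs size_us.
exists vs; split.
- by rewrite size_reshape size_map size_us.
- by rewrite reshapeKr // -(size_map g) -flat_us size_flatten.
move=> i j ik jk; case: (us_pseudo i j ik jk); rewrite -(nth_vs i ik) -(nth_vs j jk).
  by left; apply: (inj_map g_inj).
by rewrite th_f th'_f'; right; apply: map_rev_compatible.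
Qed.

Lemma inf_pseudo_power_free_comp k (x : nat -> A) :
  inf_pseudo_power_free th k x -> inf_pseudo_power_free th' k (g \o x).
Proof.
move=> x_free i len; rewrite (_ : factor _ _ _ = map g (factor x i len)).
  by move/pseudo_power_map; apply: x_free.
by rewrite /factor /mkseq -map_comp.
Qed.

End PullBack.

Lemma card_leq_injection (A B : finType) (X : {set A}) (Y : {set B}) (y0 : B) :
  #|X| <= #|Y| -> exists e : A -> B, {in X &, injective e} /\ {in X, forall a, e a \in Y}.
Proof.
move=> leXY; have idx_lt a : a \in X -> index a (enum X) < size (enum Y).
  by move=> aX; rewrite -cardE (leq_trans _ leXY) // cardE index_mem mem_enum.
exists (fun a => nth y0 (enum Y) (index a (enum X))); split.
  move=> a b aX bX /eqP; rewrite nth_uniq ?idx_lt ?enum_uniq // => /eqP.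
  by apply: index_inj; rewrite ?mem_enum.
by move=> a aX; rewrite -mem_enum mem_nth ?idx_lt.
Qed.

Section LetterInvolution.
Variables (n : nat) (f : 'I_n -> 'I_n).

Definition fixed_letters := [set a : 'I_n | f a == a].
Definition lower_letters := [set a : 'I_n | a < f a].

Lemma Idt_letter (th : seq 'I_n -> seq 'I_n) :
  (forall w, th w = rev (map f w)) -> Idt th = fixed_letters.
Proof. by move=> th_f; apply/setP => a; rewrite !inE th_f /= eqseq_cons andbT. Qed.

Lemma Trn_letter (th : seq 'I_n -> seq 'I_n) :
  (forall w, th w = rev (map f w)) -> Trn th = lower_letters.
Proof.
move=> th_f; apply/setP => a; rewrite !inE th_f /=.
by apply/existsP/idP => [[b /andP[/eqP[<-]]] | lt_a] //; exists (f a); rewrite eqxx.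
Qed.

Lemma lower_letters_fixedF (a : 'I_n) : a \in lower_letters -> a \notin fixed_letters.
Proof. by rewrite !inE => lt_a; apply/eqP => fa; rewrite fa ltnn in lt_a. Qed.

Hypothesis fK : involutive f.

Lemma lower_lettersF (a : 'I_n) : a \in lower_letters -> f a \notin lower_letters.
Proof. by rewrite !inE fK -leqNgt => /ltnW. Qed.

Lemma fixed_letters_inv (a : 'I_n) : (f a \in fixed_letters) = (a \in fixed_letters).
Proof. by rewrite !inE fK eq_sym. Qed.

Lemma letter_trichotomy (a : 'I_n) :
  [\/ a \in lower_letters, f a \in lower_letters | a \in fixed_letters].
Proof.
rewrite !inE fK; case: (ltngtP a (f a)) => [lt|gt|eq].
- by constructor 1.
- by constructor 2.
- by constructor 3; apply/eqP/val_inj.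
Qed.

End LetterInvolution.

Section Embedding.
Variables (n m : nat) (f : 'I_n -> 'I_n) (f' : 'I_m -> 'I_m).
Hypotheses (fK : involutive f) (f'K : involutive f').
Variables (eT eI : 'I_n -> 'I_m).
Hypotheses (eT_inj : {in lower_letters f &, injective eT})
  (eT_lower : {in lower_letters f, forall a, eT a \in lower_letters f'})
  (eI_inj : {in fixed_letters f &, injective eI})
  (eI_free : {in fixed_letters f, forall a,
     eI a \in fixed_letters f' :|: (lower_letters f' :\: eT @: lower_letters f)}).

Definition embed a :=
  if a \in lower_letters f then eT a
  else if f a \in lower_letters f then f' (eT (f a))
  else eI a.

Lemma embed_lower a : a \in lower_letters f -> embed a = eT a.
Proof. by rewrite /embed => ->. Qed.

Lemma embed_upper a : f a \in lower_letters f -> embed a = f' (eT (f a)).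
Proof. by move=> faL; rewrite /embed faL ifN // -[a]fK lower_lettersF. Qed.

Lemma embed_fixed a : a \in fixed_letters f -> embed a = eI a.
Proof.
move=> aI; have aNL : a \notin lower_letters f by apply: contraTN aI; apply: lower_letters_fixedF.
by move: aI; rewrite /embed inE => /eqP ->; rewrite (negbTE aNL).
Qed.

Lemma embed_compatible : compatible f f' embed.
Proof.
move=> a; case: (letter_trichotomy fK a) => [aL|aU|aI].
- by left; rewrite embed_lower // embed_upper fK.
- by left; rewrite embed_upper // f'K embed_lower.
have fa : f a = a by move: aI; rewrite inE => /eqP.
rewrite embed_fixed //; have := eI_free aI; rewrite inE => /orP[cI|/setDP[cL cS]].
  by left; move: cI; rewrite fa embed_fixed // inE => /eqP.
right=> b; case: (letter_trichotomy fK b) => [bL|bU|bI].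
- rewrite embed_lower // => Eb.
  by have := eT_lower bL; rewrite Eb (negbTE (lower_lettersF f'K cL)).
- by rewrite embed_upper // => /(can_inj f'K) Eb; rewrite -Eb imset_f in cS.
rewrite embed_fixed // => Eb; have := eI_free bI.
rewrite Eb in_setU in_setD fixed_letters_inv // (negbTE (lower_letters_fixedF cL)).
by rewrite (negbTE (lower_lettersF f'K cL)) andbF.
Qed.

Lemma embed_inj : injective embed.
Proof.
have f'_lowerF c : c \in lower_letters f' -> f' c \notin fixed_letters f' :|: lower_letters f'.
  by move=> cL; rewrite in_setU fixed_letters_inv // negb_or lower_letters_fixedF ?lower_lettersF.
have fixed_mem b : b \in fixed_letters f -> embed b \in fixed_letters f' :|: lower_letters f'.
  move=> bI; rewrite embed_fixed //; have := eI_free bI.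
  by rewrite !in_setU in_setD => /orP[->|/andP[_ ->]]; rewrite ?orbT.
have neq_LU a b : a \in lower_letters f -> f b \in lower_letters f -> embed a <> embed b.
  move=> aL bU; rewrite embed_lower // embed_upper // => Eab.
  by have := lower_lettersF f'K (eT_lower bU); rewrite -Eab (eT_lower aL).
have neq_LI a b : a \in lower_letters f -> b \in fixed_letters f -> embed a <> embed b.
  move=> aL bI; rewrite embed_lower // embed_fixed // => Eab; have := eI_free bI.
  by rewrite -Eab in_setU in_setD imset_f // (negbTE (lower_letters_fixedF (eT_lower aL))).
have neq_UI a b : f a \in lower_letters f -> b \in fixed_letters f -> embed a <> embed b.
  move=> aU bI Eab; have := f'_lowerF _ (eT_lower aU).
  by rewrite -embed_upper // Eab (fixed_mem b bI).
move=> a b Eab; case: (letter_trichotomy fK a) => [aL|aU|aI];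
  case: (letter_trichotomy fK b) => [bL|bU|bI].
- by apply: eT_inj; rewrite -?embed_lower.
- by case: (neq_LU a b).
- by case: (neq_LI a b).
- by case: (neq_LU b a).
- rewrite !embed_upper // in Eab.
  by apply: (can_inj fK); apply: eT_inj (can_inj f'K Eab).
- by case: (neq_UI a b).
- by case: (neq_LI b a).
- by case: (neq_UI b a).
- by apply: eI_inj; rewrite -?embed_fixed.
Qed.

End Embedding.

Lemma exists_compatible_injection n m (f : 'I_n -> 'I_n) (f' : 'I_m -> 'I_m) (a0 : 'I_n) :
  involutive f -> involutive f' ->
  #|lower_letters f| <= #|lower_letters f'| ->
  #|fixed_letters f| + #|lower_letters f| <= #|fixed_letters f'| + #|lower_letters f'| ->
  exists g : 'I_n -> 'I_m, injective g /\ compatible f f' g.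
Proof.
move=> fK f'K leT leIT.
have f_nonempty : 0 < #|fixed_letters f| + #|lower_letters f|.
  rewrite addn_gt0; apply/orP.
  by case: (letter_trichotomy fK a0) => ?; [right|right|left];
    apply/card_gt0P; eexists; eassumption.
have [y0 _] : exists y0 : 'I_m, y0 \in fixed_letters f' :|: lower_letters f'.
  move: (leq_trans f_nonempty leIT); rewrite addn_gt0.
  by case/orP=> /card_gt0P[y0 y0_in]; exists y0; rewrite in_setU y0_in ?orbT.
have [eT [eT_inj eT_lower]] := card_leq_injection y0 leT.
pose Y := fixed_letters f' :|: (lower_letters f' :\: eT @: lower_letters f).
have leIY : #|fixed_letters f| <= #|Y|.
  have disj : [disjoint fixed_letters f' & lower_letters f' :\: eT @: lower_letters f].
    rewrite disjoint_subset; apply/subsetP => c cI; rewrite inE in_setD negb_and.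
    by apply/orP; right; apply: contraTN cI; apply: lower_letters_fixedF.
  have sub : eT @: lower_letters f \subset lower_letters f'.
    by apply/subsetP => _ /imsetP[a aL ->]; apply: eT_lower.
  move: disj; rewrite -(leq_card_setU _ _).2 => /eqP ->.
  rewrite cardsDS // card_in_imset //; lia.
have [eI [eI_inj eI_free]] := card_leq_injection y0 leIY.
exists (embed f f' eT eI); split; [exact: embed_inj | exact: embed_compatible].
Qed.

Theorem mainTheorem14 (k n m : nat)
  (th : seq 'I_n -> seq 'I_n) (th' : seq 'I_m -> seq 'I_m) :
  2 <= k ->
  antimorphic_involution th -> antimorphic_involution th' ->
  #|Trn th| <= #|Trn th'| ->
  #|Idt th| + #|Trn th| <= #|Idt th'| + #|Trn th'| ->
  (exists x : nat -> 'I_n, inf_pseudo_power_free th k x) ->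
  exists y : nat -> 'I_m, inf_pseudo_power_free th' k y.
Proof.
move=> _ /antimorphic_involution_letter[f [fK th_f]].
move=> /antimorphic_involution_letter[f' [f'K th'_f']].
rewrite (Idt_letter th_f) (Idt_letter th'_f') (Trn_letter th_f) (Trn_letter th'_f').
move=> leT leIT [x x_free].
have [g [g_inj g_compat]] := exists_compatible_injection (x 0) fK f'K leT leIT.
by exists (g \o x); apply: (inf_pseudo_power_free_comp g_inj g_compat th_f th'_f').
Qed.
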